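(* Let $\mathcal{X}$ be an instance space and $\mathcal{Y}$ a finite label set. Let $\hat f:\mathcal{X}\to\mathbb{P}(\mathcal{Y})$ be a fixed probabilistic classifier (independent of the data below), writing $\hat f(x)_y$ for the probability of label $y$ at $x$. Let $(x_j,y_j)$, $j\in\mathcal{I}_2$, be calibration points, each observed only through a candidate set $S_j\subseteq\mathcal{Y}$ with $y_j\in S_j$, and let $(x_{new},y_{new})$ be a test point. Define the multiset $$\mathcal{E}_{\mathrm{mean}}:=\Big\{\,1-\frac{\sum_{y\in S_j}\hat f(x_j)_y}{|S_j|}: j\in\mathcal{I}_2\Big\}.$$ If the points $\{(x_j,y_j):j\in\mathcal{I}_2\}\cup\{(x_{new},y_{new})\}$ are exchangeable and $\hat f(x_j)_{y_j}\ge 1/|S_j|$ for all $j\in\mathcal{I}_2$ (with probability one), then for every $\epsilon\in(0,1]$, $$\mathbb{P}\big(y_{new}\in\mathcal{T}(x_{new},\hat f,\mathcal{E}_{\mathrm{mean}},\epsilon)\big)\ge 1-\epsilon .$$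
   Context: For a finite multiset $\mathcal{E}$ of real numbers and $\epsilon\in(0,1]$, the critical score $q(\mathcal{E},\epsilon)$ is the $\lceil(1+|\mathcal{E}|)(1-\epsilon)\rceil$-th smallest element of $\mathcal{E}$ (counted with multiplicity); if this index exceeds $|\mathcal{E}|$, $q(\mathcal{E},\epsilon)$ is taken to be $+\infty$. For $x\in\mathcal{X}$, the prediction set is $\mathcal{T}(x,\hat f,\mathcal{E},\epsilon):=\{y\in\mathcal{Y}:\hat f(x)_y\ge 1-q(\mathcal{E},\epsilon)\}$. ''Valid'' means the coverage bound $\mathbb{P}(y_{new}\in\mathcal{T})\ge 1-\epsilon$. *)

From HB Require Import structures.
From mathcomp Require Import all_boot all_order all_algebra perm.
From mathcomp Require Import all_classical all_reals all_analysis.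
Set Implicit Arguments. Unset Strict Implicit. Unset Printing Implicit Defensive.
Import Order.TTheory GRing.Theory Num.Theory.
Local Open Scope classical_set_scope.
Local Open Scope ring_scope.

(* Convention for a non-positive index (only possible for eps = 1): -oo. *)
Definition critical_score (R : realType) (E : seq R) (eps : R) : \bar R :=
  let k := Num.ceil ((1 + (size E)%:R) * (1 - eps)) in
  if k <= 0 then -oo%E
  else if (size E < `|k|)%N then +oo%E
  else (nth 0 (sort <=%R E) `|k|.-1)%:E.

Definition conformal_set (R : realType) (X : Type) (Y : finType)
  (f : X -> Y -> R) (x : X) (E : seq R) (eps : R) : {set Y} :=
  [set y : Y | (1%:E - critical_score E eps <= (f x y)%:E)%E].

Definition prob_classifier (R : realType) (X : Type) (Y : finType)
  (f : X -> Y -> R) : Prop :=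
  (forall x y, 0 <= f x y) /\ (forall x, \sum_(y : Y) f x y = 1).

(* Generators of the product sigma-algebra on ('I_m -> X * Y), where X carries
   its sigma-algebra and the finite Y the discrete one. *)
Definition cyl_sets d (X : measurableType d) (Y : finType) (m : nat)
  : set (set ('I_m -> X * Y)) :=
  [set A | exists i B, measurable B /\ A = [set z | B (z i).1]] `|`
  [set A | exists i (c : Y), A = [set z | (z i).2 = c]].

Definition exchangeable d (T : measurableType d) (R : realType)
  (P : probability T R) dX (X : measurableType dX) (Y : finType) (m : nat)
  (x : 'I_m -> T -> X) (y : 'I_m -> T -> Y) : Prop :=
  forall (s : {perm 'I_m}) (A : set ('I_m -> X * Y)),
    <<s @cyl_sets _ X Y m >> A ->
    P [set w | A (fun i => (x (s i) w, y (s i) w))] =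
    P [set w | A (fun i => (x i w, y i w))].

(* The multiset E_mean of the calibration points (indices 0..n-1 of 'I_n.+1). *)
Definition E_mean (R : realType) (X : Type) (Y : finType) (f : X -> Y -> R)
  (n : nat) (xs : 'I_n.+1 -> X) (S : 'I_n -> {set Y}) : seq R :=
  [seq 1 - (\sum_(c in S j) f (xs (widen_ord (leqnSn n) j)) c) / #|S j|%:R
  | j <- enum 'I_n].

From HB Require Import structures.
From mathcomp Require Import all_boot all_order all_algebra perm.
From mathcomp Require Import all_classical all_reals all_analysis.
From mathcomp Require Import measurable_realfun.
Set Implicit Arguments.
Unset Strict Implicit.
Unset Printing Implicit Defensive.
Import Order.TTheory GRing.Theory Num.Theory.
Local Open Scope classical_set_scope.
Local Open Scope ring_scope.

(* Score every point by s_l = 1 - f(x_l)_{y_l}.  By exchangeability the events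
   "fewer than K of the n+1 scores lie strictly below s_l" all have the same
   probability, and at every outcome at least K of them occur (those of the K
   smallest scores), so each has probability at least K/(n+1).  Because
   f(x_j)_{y_j} >= 1/|S_j| is at least the mean of f(x_j) over S_j, the
   calibration score 1 - mean dominates s_j; hence on the event for l = n+1
   fewer than K elements of E_mean lie below the test score, which for
   K = ceil((n+1)(1-eps)) says exactly that y_new is in the prediction set. *)

Lemma count_enum (I : finType) (p : pred I) : count p (enum I) = #|p|.
Proof. by rewrite cardE -size_filter enumT /enum_mem -enumT. Qed.

Section OrderStatistics.
Variable R : realDomainType.
Implicit Types (L : seq R) (t : R).

Local Notation sorted_nth L i := (nth 0 (sort <=%R L) i).

Lemma le_sorted_nth L i j : (i <= j < size L)%N -> sorted_nth L i <= sorted_nth L j.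
Proof.
move=> /andP[le_ij lt_j].
apply: (sorted_leq_nth le_trans lexx 0 (sort_le_sorted L)); rewrite ?inE ?size_sort //.
exact: leq_ltn_trans le_ij lt_j.
Qed.

Lemma leq_count_take_sort (p : pred R) L K :
  (K <= size L)%N -> all p (take K (sort <=%R L)) -> (K <= count p L)%N.
Proof.
move=> KL; rewrite all_count => /eqP p_take.
rewrite -(count_sort <=%R) -(cat_take_drop K (sort <=%R L)) count_cat p_take.
by rewrite size_takel ?size_sort ?leq_addr.
Qed.

Lemma all_take_sort_le L K :
  (K <= size L)%N -> all (<= sorted_nth L K.-1) (take K (sort <=%R L)).
Proof.
move=> KL; apply/(all_nthP 0) => i; rewrite size_takel ?size_sort // => iK.
rewrite nth_take //; apply: le_sorted_nth.
by rewrite -ltnS prednK ?(leq_trans iK) ?(leq_ltn_trans _ iK).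
Qed.

Lemma le_sorted_nth_count L K t : (0 < K <= size L)%N ->
  (t <= sorted_nth L K.-1) = (count (< t) L < K)%N.
Proof.
move=> /andP[K_gt0 KL]; apply/idP/idP => [t_le | ].
- rewrite -(count_sort <=%R) -(cat_take_drop K.-1 (sort <=%R L)) count_cat.
  have -> : count (< t) (drop K.-1 (sort <=%R L)) = 0%N.
    apply/eqP; rewrite -leqn0 leqNgt -has_count; apply/hasPn => e /(nthP 0)[i].
    rewrite size_drop size_sort nth_drop => i_lt <-; rewrite -leNgt.
    by apply: le_trans t_le _; rewrite le_sorted_nth // leq_addr /= -ltn_subRL.
  rewrite addn0 (leq_ltn_trans (count_size _ _)) // size_takel ?prednK //.
  by rewrite size_sort (leq_trans (leq_pred K)).
- apply: contraLR; rewrite -ltNge -leqNgt => lt_t.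
  apply: leq_count_take_sort => //; have := all_take_sort_le KL.
  by apply: sub_all => e /= /le_lt_trans; apply.
Qed.

Definition score_rank (I : finType) (s : I -> R) (i : I) : nat := #|[pred l | s l < s i]|.

Lemma score_rank_perm (I : finType) (s : I -> R) (p : {perm I}) i :
  score_rank (s \o p) i = score_rank s (p i).
Proof.
rewrite /score_rank -(fintype.card_image (@perm_inj _ p)); apply: eq_card => l /=.
apply/mapP/idP => [[l'] | lt_l]; first by rewrite mem_enum => lt_l' ->.
by exists ((p^-1)%g l); rewrite ?mem_enum ?inE /= permKV.
Qed.

Lemma card_score_rank_lt (I : finType) (s : I -> R) K :
  (K <= #|I|)%N -> (K <= #|[pred i | score_rank s i < K]|)%N.
Proof.
case: K => [//|K] KI.
pose L := [seq s l | l <- enum I].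
have L_size : size L = #|I| by rewrite size_map -cardE.
have KL : (K.+1 <= size L)%N by rewrite L_size.
have := leq_count_take_sort KL (all_take_sort_le KL).
rewrite count_map count_enum => /leq_trans; apply; apply: subset_leq_card.
apply/fintype.subsetP => i; rewrite !inE /= => le_i.
by rewrite /score_rank -count_enum -(count_map s (< s i)) -le_sorted_nth_count ?L_size.
Qed.
End OrderStatistics.

Lemma mean_le_inv_card (R : realFieldType) (Y : finType) (g : Y -> R) (A : {set Y}) :
  (forall c, 0 <= g c) -> \sum_c g c <= 1 ->
  (\sum_(c in A) g c) / #|A|%:R <= #|A|%:R^-1.
Proof.
move=> g_ge0 sum_le1; rewrite -[leRHS]mul1r ler_wpM2r ?invr_ge0 //.
apply: le_trans sum_le1; rewrite [leRHS](bigID (mem A)) /= lerDl.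
by apply: sumr_ge0 => c _; apply: g_ge0.
Qed.

Section Measurability.
Context d (T : measurableType d).

Lemma measurable_bool_comb (I : finType) (b : I -> T -> bool)
    (Phi : (I -> bool) -> Prop) :
  (forall i, measurable_fun setT (b i)) -> measurable [set w | Phi (fun i => b i w)].
Proof.
move=> mb.
have -> : [set w | Phi (fun i => b i w)] =
    \bigcup_(v in [set v : {ffun I -> bool} | Phi v])
      \bigcap_(i in [set: I]) (b i @^-1` [set v i]).
  apply/seteqP; split => [w Phi_w | w [v /= Phi_v b_v]].
  - exists [ffun i => b i w]; last by move=> i _; rewrite /= ffunE.
    rewrite /= (_ : fun_of_fin _ = fun i => b i w) //.
    by apply/funext => i; rewrite ffunE.
  - by rewrite (_ : (fun i => b i w) = v) //; apply/funext => i; apply: b_v.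
apply: fin_bigcup_measurable; first exact: finite_finset.
move=> v _; apply: fin_bigcap_measurable; first exact: finite_finset.
by move=> i _; rewrite -[X in measurable X]setTI; apply: mb.
Qed.

Lemma measurable_fun_app_finite dX (X : measurableType dX) dZ (Z : measurableType dZ)
    (K : finType) (u : T -> X) (v : T -> K) (F : X -> K -> Z) :
  measurable_fun setT u -> (forall c, measurable [set w | v w = c]) ->
  (forall c, measurable_fun setT (F ^~ c)) ->
  measurable_fun setT (fun w => F (u w) (v w)).
Proof.
move=> mu mv mF _ B mB; rewrite setTI.
have -> : (fun w => F (u w) (v w)) @^-1` B =
    \bigcup_(c in [set: K]) ([set w | v w = c] `&` (F ^~ c \o u) @^-1` B).
  by apply/seteqP; split => [w Bw | w [c _ [/= <-]]] //; exists (v w).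
apply: fin_bigcup_measurable; first exact: finite_finset.
move=> c _; apply: measurableI => //; rewrite -[X in measurable X]setTI.
exact: (measurableT_comp (mF c) mu) measurableT _ mB.
Qed.

Lemma le_measure_ae (R : realType) (mu : {measure set T -> \bar R}) (A B : set T) :
  measurable A -> measurable B -> {ae mu, forall w, A w -> B w} -> (mu A <= mu B)%E.
Proof.
move=> mA mB [N [mN muN0 notAB_N]].
have AB_N : A `<=` B `|` N.
  move=> w Aw; have [Bw | nBw] := pselect (B w); [by left | right].
  by apply: notAB_N => /(_ Aw).
rewrite -(measureU0 mB mN muN0).
by apply: le_measure; rewrite ?inE //; exact: measurableU.
Qed.
End Measurability.

Section Probability.
Context d (T : measurableType d) (R : realType) (P : probability T R).

Lemma card_le_sum_prob (I : finType) (B : I -> T -> bool) (K : nat) :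
  (forall i, measurable [set w | B i w]) ->
  (forall w, K <= #|[pred i | B i w]|)%N ->
  ((K%:R)%:E <= \sum_i P [set w | B i w])%E.
Proof.
move=> mB K_le.
have mind i : measurable_fun setT (fun w => (\1_[set w | B i w] w : R)%:E).
  by apply/measurable_EFinP; exact: measurable_indic.
have -> : (\sum_i P [set w | B i w] = \int[P]_w \sum_i (\1_[set w | B i w] w)%:E)%E.
  rewrite ge0_integral_sum //.
  by apply: eq_bigr => i _; rewrite integral_indic // setIT.
apply: (@le_trans _ _ (\int[P]_w (K%:R)%:E)%E).
  by rewrite integral_cst //= probability_setT mule1.
apply: ge0_le_integral => //; first exact: emeasurable_sum.
move=> w _; rewrite sumEFin lee_fin -natr_sum ler_nat.
apply: leq_trans (K_le w) _; rewrite -sum1_card big_mkcond /=.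
by apply: leq_sum => i _; case: ifP => // B_iw; rewrite mem_set.
Qed.

Lemma prob_ge_card_ratio (I : finType) (B : I -> T -> bool) (K : nat) (i0 : I) :
  (forall i, measurable [set w | B i w]) ->
  (forall i, P [set w | B i w] = P [set w | B i0 w]) ->
  (forall w, K <= #|[pred i | B i w]|)%N ->
  ((K%:R / #|I|%:R)%:E <= P [set w | B i0 w])%E.
Proof.
move=> mB eq_PB K_le; have := card_le_sum_prob mB K_le.
under eq_bigr do rewrite eq_PB.
have I_gt0 : (0 < #|I|)%N by apply/card_gt0P; exists i0.
set p := P _; have p_fin : p \is a fin_num by apply: fin_num_measure.
rewrite -(fineK p_fin) sumEFin !lee_fin sumr_const.
by rewrite ler_pdivrMr ?ltr0n // mulr_natr.
Qed.
End Probability.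

Section Exchangeability.
Context (R : realType) dX (X : measurableType dX) (Y : finType) (m : nat).

Lemma sigma_cyl_score_rank (sc : X -> Y -> R) (y0 : Y) (j : 'I_m) (K : nat) :
  (forall c, measurable_fun setT (sc ^~ c)) ->
  <<s @cyl_sets _ X Y m >> [set z | score_rank (fun l => sc (z l).1 (z l).2) j < K]%N.
Proof.
move=> msc.
(* g_sigma_algebraType needs a pointed carrier; y0 supplies the point. *)
pose C : choiceType := ('I_m -> X * Y)%type.
pose Z : pointedType :=
  HB.pack (Choice.sort C) (Choice.class C) (isPointed.Build C (fun=> (point, y0))).
pose M := g_sigma_algebraType (@cyl_sets _ X Y m : set (set Z)).
have mscore l : measurable_fun setT (fun z : M => sc (z l).1 (z l).2).
  apply: measurable_fun_app_finite => // [_ B mB | c]; apply: sub_gen_smallest.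
  - by left; exists l, B; rewrite setTI.
  - by right; exists l, c.
exact: measurable_bool_comb (fun l (z : M) => sc (z l).1 (z l).2 < sc (z j).1 (z j).2)
  (fun p => (#|[pred l | p l]| < K)%N : Prop)
  (fun l => measurable_fun_ltr (mscore l) (mscore j)).
Qed.

Context d (T : measurableType d) (P : probability T R)
  (x : 'I_m -> T -> X) (y : 'I_m -> T -> Y).

Lemma exchangeable_score_rank (sc : X -> Y -> R) (i j : 'I_m) (K : nat) :
  exchangeable P x y -> (forall c, measurable_fun setT (sc ^~ c)) ->
  P [set w | score_rank (fun l => sc (x l w) (y l w)) i < K]%N =
  P [set w | score_rank (fun l => sc (x l w) (y l w)) j < K]%N.
Proof.
move=> exch msc.
have := exch (tperm i j) _ (sigma_cyl_score_rank (y i point) j K msc).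
move=> /= <-; congr (P _); apply/funext => w.
have := score_rank_perm (fun l => sc (x l w) (y l w)) (tperm i j) j.
by rewrite tpermR /= => <-.
Qed.
End Exchangeability.

Section ConformalSet.
Context (R : realType) (X : Type) (Y : finType) (f : X -> Y -> R) (x : X)
  (E : seq R) (eps : R).

Lemma mem_conformal_set (K : nat) (c : Y) :
  Num.ceil ((1 + (size E)%:R) * (1 - eps)) = K%:Z -> (0 < K <= size E)%N ->
  (c \in conformal_set f x E eps) = (count (< (1 - f x c)%R) E < K)%N.
Proof.
move=> kK /andP[K_gt0 KE].
rewrite /conformal_set inE /critical_score kK lez_nat leqNgt K_gt0 /= ltnNge KE /=.
by rewrite -EFinB lee_fin lerBlDr addrC -lerBlDr le_sorted_nth_count ?K_gt0.
Qed.

Lemma conformal_set_full (K : nat) :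
  Num.ceil ((1 + (size E)%:R) * (1 - eps)) = K%:Z -> (size E < K)%N ->
  conformal_set f x E eps = [set: Y]%SET.
Proof.
move=> kK EK; apply/setP => c.
rewrite /conformal_set !inE /critical_score kK lez_nat leqNgt.
by rewrite (leq_ltn_trans (leq0n _) EK) /= EK leNye.
Qed.
End ConformalSet.

Section Coverage.
Context (R : realType) d (T : measurableType d) (P : probability T R)
  dX (X : measurableType dX) (Y : finType) (f : X -> Y -> R) (n : nat)
  (x : 'I_n.+1 -> T -> X) (y : 'I_n.+1 -> T -> Y) (S : 'I_n -> T -> {set Y}).
Hypotheses (f_prob : prob_classifier f)
  (mf : forall c, measurable_fun setT (f ^~ c))
  (mx : forall i, measurable_fun setT (x i))
  (my : forall i c, measurable [set w | y i w = c])
  (mS : forall j A, measurable [set w | S j w = A])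
  (exch : exchangeable P x y).

Local Notation widen := (widen_ord (leqnSn n)).

Hypothesis ae_inv_card_le :
  forall j, {ae P, forall w, #|S j w|%:R^-1 <= f (x (widen j) w) (y (widen j) w)}.

Let sc a c := 1 - f a c.
Let score l w := sc (x l w) (y l w).
Let cal_score j w := 1 - (\sum_(c in S j w) f (x (widen j) w) c) / #|S j w|%:R.

Let measurable_sc c : measurable_fun setT (sc ^~ c).
Proof. exact: measurable_funB. Qed.

Let measurable_score l : measurable_fun setT (score l).
Proof. exact: measurable_fun_app_finite (mx l) (my l) measurable_sc. Qed.

Let measurable_cal_score j : measurable_fun setT (cal_score j).
Proof.
have := measurable_fun_app_finite (mx (widen j)) (mS j)
  (F := fun a (A : {set Y}) => 1 - (\sum_(c in A) f a c) / #|A|%:R).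
apply=> A.
apply: measurable_funB => //; apply: measurable_funM => //.
under eq_fun do rewrite -big_enum.
exact: measurable_sum.
Qed.

Let measurable_rank_lt i K : measurable [set w | score_rank (score ^~ w) i < K]%N.
Proof.
exact: measurable_bool_comb (fun l w => score l w < score i w)
  (fun p => (#|[pred l | p l]| < K)%N : Prop) (fun l => measurable_fun_ltr _ _).
Qed.

Lemma ae_score_le_cal_score :
  {ae P, forall w, forall j, (score (widen j) w <= cal_score j w)%R}.
Proof.
apply: filterS _ (filter_forall _ ae_inv_card_le) => w inv_card_le j.
apply: lerB => //; apply: le_trans (inv_card_le j).
by case: f_prob => f_ge0 f_sum1; rewrite mean_le_inv_card ?f_sum1.
Qed.

Lemma card_cal_score_le_rank w :
  (forall j, score (widen j) w <= cal_score j w) ->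
  (#|[pred j | (cal_score j w < score ord_max w)%R]|
     <= score_rank (score ^~ w) ord_max)%N.
Proof.
move=> score_le.
apply: (@leq_trans #|[pred j | score (widen j) w < score ord_max w]|).
  apply: subset_leq_card; apply/fintype.subsetP => j; rewrite !inE.
  exact: le_lt_trans (score_le j).
have widen_inj : injective widen by move=> a b /(congr1 val) /= /ord_inj.
rewrite -(fintype.card_image widen_inj); apply: subset_leq_card.
by apply/fintype.subsetP => l /mapP[j]; rewrite mem_enum => lt_j ->.
Qed.

Lemma prob_rank_lt_ge K : (K <= n.+1)%N ->
  ((K%:R / n.+1%:R)%:E <= P [set w | score_rank (score ^~ w) ord_max < K]%N)%E.
Proof.
move=> Kn.
have := @prob_ge_card_ratio _ _ _ P _
  (fun i w => score_rank (score ^~ w) i < K)%N K ord_max.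
rewrite card_ord; apply.
- by move=> i; apply: measurable_rank_lt.
- by move=> i; apply: exchangeable_score_rank.
- by move=> w; apply: card_score_rank_lt; rewrite card_ord.
Qed.

Lemma coverage_ge K : (K <= n)%N ->
  ((K%:R / n.+1%:R)%:E <=
   P [set w | count (< score ord_max w) (E_mean f (x ^~ w) (S ^~ w)) < K]%N)%E.
Proof.
move=> Kn; apply: le_trans (prob_rank_lt_ge (leqW Kn)) _.
have -> : [set w | count (< score ord_max w) (E_mean f (x ^~ w) (S ^~ w)) < K]%N =
    [set w | #|[pred j | (cal_score j w < score ord_max w)%R]| < K]%N.
  by apply/funext => w /=; rewrite /E_mean count_map count_enum.
apply: le_measure_ae => //.
  exact: measurable_bool_comb (fun j w => cal_score j w < score ord_max w)
    (fun p => (#|[pred j | p j]| < K)%N : Prop) (fun j => measurable_fun_ltr _ _).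
apply: filterS _ ae_score_le_cal_score => w score_le /= lt_K.
exact: leq_ltn_trans (card_cal_score_le_rank score_le) lt_K.
Qed.
End Coverage.

Theorem theorem3 (R : realType) (d : measure_display) (T : measurableType d)
  (P : probability T R) (dX : measure_display) (X : measurableType dX)
  (Y : finType) (f : X -> Y -> R) (n : nat)
  (x : 'I_n.+1 -> T -> X) (y : 'I_n.+1 -> T -> Y) (S : 'I_n -> T -> {set Y})
  (eps : R) :
  prob_classifier f ->
  (forall c : Y, measurable_fun setT (fun z : X => f z c)) ->
  (forall i, measurable_fun setT (x i)) ->
  (forall i (c : Y), measurable [set w | y i w = c]) ->
  (forall j (A : {set Y}), measurable [set w | S j w = A]) ->
  (forall j w, y (widen_ord (leqnSn n) j) w \in S j w) ->
  exchangeable P x y ->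
  (forall j, {ae P, forall w,
     #|S j w|%:R^-1 <= f (x (widen_ord (leqnSn n) j) w)
                         (y (widen_ord (leqnSn n) j) w)}) ->
  0 < eps <= 1 ->
  ((1 - eps)%:E <=
   P [set w | y ord_max w \in
        conformal_set f (x ord_max w) (E_mean f (fun i => x i w) (S^~ w)) eps])%E.
Proof.
move=> f_prob mf mx my mS _ exch ae_inv_card /andP[eps_gt0 _].
have size_E w : size (E_mean f (x ^~ w) (S ^~ w)) = n by rewrite size_map size_enum_ord.
have k_ge := ceil_ge ((1 + n%:R) * (1 - eps)).
have n1_gt0 : (0 : R) < 1 + n%:R by rewrite nat1r ltr0n.
have [k_le0 | k_gt0] := lerP (Num.ceil ((1 + n%:R) * (1 - eps))) 0.
  apply: le_trans (measure_ge0 _ _); rewrite lee_fin -(pmulr_rle0 _ n1_gt0).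
  by apply: le_trans k_ge _; rewrite lerz0.
have [K kK] : exists K : nat, Num.ceil ((1 + n%:R) * (1 - eps)) = K%:Z.
  by exists `|Num.ceil ((1 + n%:R) * (1 - eps))|%N; rewrite gez0_abs // ltW.
have [nK | Kn] := ltnP n K.
  rewrite (_ : [set w | _] = setT); first by rewrite probability_setT lee_fin gerBl ltW.
  apply/seteqP; split => // w _ /=.
  by rewrite (conformal_set_full _ _ (K := K)) ?inE ?size_E.
have K_gt0 : (0 < K)%N by rewrite -ltz_nat -kK.
rewrite (_ : [set w | _] =
    [set w | count (< (1 - f (x ord_max w) (y ord_max w))%R)
                   (E_mean f (x ^~ w) (S ^~ w)) < K]%N).
  apply: le_trans (coverage_ge f_prob mf mx my mS exch ae_inv_card Kn).
  rewrite lee_fin ler_pdivlMr ?ltr0n // mulrC -nat1r.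
  by rewrite kK in k_ge; exact: k_ge.
by apply/funext => w /=; rewrite (mem_conformal_set _ _ (K := K)) ?size_E ?K_gt0.
Qed.
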